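(* Let $\Pi=(\iota,\tau,\beta)$ be a safety problem. If $\Pi$ has a proof in the incremental forward proof system $\mathbf{FI}$, then $\Pi$ is safe.
   Context: A first-order vocabulary $\Sigma$ consists of constant, function and relation symbols; $\Sigma'=\{a' : a\in\Sigma\}$ is a disjoint copy of it, and for a formula $\varphi$ over $\Sigma$, $\varphi'$ denotes $\varphi$ with every symbol of $\Sigma$ replaced by its primed copy. A state is a first-order structure over $\Sigma$. A safety problem is a triple $(\iota,\tau,\beta)$, where $\iota$ (initial states) and $\beta$ (bad states) are closed formulas over $\Sigma$ and $\tau$ (transitions) is a closed formula over $\Sigma\uplus\Sigma'$. A pair of states $(s,t)$ over a common domain is a transition if the structure over $\Sigma\uplus\Sigma'$ interpreting $\Sigma$ as in $s$ and $\Sigma'$ as in $t$ satisfies $\tau$. A trace is a finite sequence of states over a common domain in which every two consecutive states form a transition. The problem is safe if there is no trace $s_0,\dots,s_k$ with $s_0\models\iota$ and $s_k\models\beta$. Throughout, $A\Rightarrow B$ means that the implication $A\to B$ is valid. Proofs: the statements of a proof system are safety problems. A proof of $\Pi$ in a system is a finite tree whose nodes are safety problems, whose root is $\Pi$, and in which each node together with its children is an instance of one of the system's inference rules, with side conditions valid. The system $\mathbf{FI}$ has the following rules, where $\varphi$ ranges over closed formulas over $\Sigma$: (Ind): no premises; conclusion $(\iota,\tau,\neg\varphi)$; side conditions $\iota\Rightarrow\varphi$ and $\varphi\wedge\tau\Rightarrow\varphi'$. (Cons): premise $(\iota,\tau,\neg\varphi)$; conclusion $(\iota,\tau,\beta)$;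 side condition $\varphi\Rightarrow\neg\beta$. (Inc): premises $(\iota,\tau,\neg\varphi)$ and $(\iota\wedge\varphi,\ \tau\wedge\varphi\wedge\varphi',\ \beta\wedge\varphi)$; conclusion $(\iota,\tau,\beta)$. *)

From Stdlib Require Import Arith Fin.

Record vocab : Type := Vocab {
  fsym : Type;               (* function symbols (incl. constants) *)
  rsym : Type;
  far  : fsym -> nat;
  rar  : rsym -> nat
}.

(** Sigma ⊎ Sigma' : [inl a] is a, [inr a] is its primed copy a'. *)
Definition dbl (S : vocab) : vocab :=
  {| fsym := fsym S + fsym S;
     rsym := rsym S + rsym S;
     far := fun g => match g with inl f | inr f => far S f end;
     rar := fun g => match g with inl r | inr r => rar S r end |}.

Inductive term (S : vocab) : Type :=
| Var : nat -> term S
| App : forall f : fsym S, (Fin.t (far S f) -> term S) -> term S.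

Inductive formula (S : vocab) : Type :=
| FFalse : formula S
| FTrue  : formula S
| FRel   : forall r : rsym S, (Fin.t (rar S r) -> term S) -> formula S
| FEq    : term S -> term S -> formula S
| FNot   : formula S -> formula S
| FAnd   : formula S -> formula S -> formula S
| FOr    : formula S -> formula S -> formula S
| FImp   : formula S -> formula S -> formula S
| FAll   : nat -> formula S -> formula S
| FEx    : nat -> formula S -> formula S.

Arguments Var {S} _.
Arguments App {S} _ _.
Arguments FFalse {S}.
Arguments FTrue {S}.
Arguments FRel {S} _ _.
Arguments FEq {S} _ _.
Arguments FNot {S} _.
Arguments FAnd {S} _ _.
Arguments FOr {S} _ _.
Arguments FImp {S} _ _.
Arguments FAll {S} _ _.
Arguments FEx {S} _ _.

Fixpoint term_free {S} (x : nat) (t : term S) : Prop :=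
  match t with
  | Var y => x = y
  | App f a => exists i, term_free x (a i)
  end.

Fixpoint free {S} (x : nat) (p : formula S) : Prop :=
  match p with
  | FFalse | FTrue => False
  | FRel r a => exists i, term_free x (a i)
  | FEq t u => term_free x t \/ term_free x u
  | FNot q => free x q
  | FAnd q r | FOr q r | FImp q r => free x q \/ free x r
  | FAll y q | FEx y q => x <> y /\ free x q
  end.

Definition closed {S} (p : formula S) : Prop := forall x, ~ free x p.

(** Renaming every symbol of Sigma: [b = false] gives phi as a formula over
    Sigma ⊎ Sigma' (unprimed), [b = true] gives phi' (primed). *)
Fixpoint term_lift {S} (b : bool) (t : term S) : term (dbl S) :=
  match t with
  | Var x => Var x
  | App f a =>
      if b then @App (dbl S) (inr f) (fun i => term_lift b (a i))
      else @App (dbl S) (inl f) (fun i => term_lift b (a i))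
  end.

Fixpoint lift {S} (b : bool) (p : formula S) : formula (dbl S) :=
  match p with
  | FFalse => FFalse
  | FTrue => FTrue
  | FRel r a =>
      if b then @FRel (dbl S) (inr r) (fun i => term_lift b (a i))
      else @FRel (dbl S) (inl r) (fun i => term_lift b (a i))
  | FEq t u => FEq (term_lift b t) (term_lift b u)
  | FNot q => FNot (lift b q)
  | FAnd q r => FAnd (lift b q) (lift b r)
  | FOr q r => FOr (lift b q) (lift b r)
  | FImp q r => FImp (lift b q) (lift b r)
  | FAll y q => FAll y (lift b q)
  | FEx y q => FEx y (lift b q)
  end.

Definition unprimed {S} (p : formula S) : formula (dbl S) := lift false p.
Definition primed {S} (p : formula S) : formula (dbl S) := lift true p.

Record structure (S : vocab) (D : Type) : Type := Struct {
  fint : forall f : fsym S, (Fin.t (far S f) -> D) -> D;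
  rint : forall r : rsym S, (Fin.t (rar S r) -> D) -> Prop
}.
Arguments fint {S D} _ _ _.
Arguments rint {S D} _ _ _.

Definition upd {D} (env : nat -> D) (x : nat) (d : D) : nat -> D :=
  fun y => if Nat.eqb y x then d else env y.

Fixpoint teval {S D} (M : structure S D) (env : nat -> D) (t : term S) : D :=
  match t with
  | Var x => env x
  | App f a => fint M f (fun i => teval M env (a i))
  end.

Fixpoint eval {S D} (M : structure S D) (env : nat -> D) (p : formula S)
  : Prop :=
  match p with
  | FFalse => False
  | FTrue => True
  | FRel r a => rint M r (fun i => teval M env (a i))
  | FEq t u => teval M env t = teval M env u
  | FNot q => ~ eval M env q
  | FAnd q r => eval M env q /\ eval M env r
  | FOr q r => eval M env q \/ eval M env r
  | FImp q r => eval M env q -> eval M env r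
  | FAll y q => forall d : D, eval M (upd env y d) q
  | FEx y q => exists d : D, eval M (upd env y d) q
  end.

Definition models {S D} (M : structure S D) (p : formula S) : Prop :=
  forall env : nat -> D, eval M env p.

(** A => B : the implication A -> B is valid (true in every structure,
    over every nonempty domain). *)
Definition implies {S} (A B : formula S) : Prop :=
  forall (D : Type), inhabited D ->
    forall M : structure S D, models M (FImp A B).

Definition pair_struct {S D} (s t : structure S D) : structure (dbl S) D :=
  {| fint := fun g =>
       match g as g0 return (Fin.t (far (dbl S) g0) -> D) -> D with
       | inl f => fint s f
       | inr f => fint t f
       end;
     rint := fun g =>
       match g as g0 return (Fin.t (rar (dbl S) g0) -> D) -> Prop with
       | inl r => rint s r
       | inr r => rint t r
       end |}.

Definition transition {S D} (tau : formula (dbl S)) (s t : structure S D)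
  : Prop := models (pair_struct s t) tau.

Definition safe {Sg : vocab} (iota : formula Sg) (tau : formula (dbl Sg))
  (beta : formula Sg) : Prop :=
  forall (D : Type), inhabited D ->
  forall (k : nat) (s : nat -> structure Sg D),
    models (s 0) iota ->
    (forall i, i < k -> transition tau (s i) (s (Datatypes.S i))) ->
    ~ models (s k) beta.

Inductive FI_provable {S : vocab}
  : formula S -> formula (dbl S) -> formula S -> Prop :=
| FI_Ind : forall iota tau phi,
    closed phi ->
    implies iota phi ->
    implies (FAnd (unprimed phi) tau) (primed phi) ->
    FI_provable iota tau (FNot phi)
| FI_Cons : forall iota tau beta phi,
    closed phi ->
    FI_provable iota tau (FNot phi) ->
    implies phi (FNot beta) ->
    FI_provable iota tau beta
| FI_Inc : forall iota tau beta phi,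
    closed phi ->
    FI_provable iota tau (FNot phi) ->
    FI_provable (FAnd iota phi)
                (FAnd tau (FAnd (unprimed phi) (primed phi)))
                (FAnd beta phi) ->
    FI_provable iota tau beta.

(* Soundness by induction on the FI proof tree.  (Ind) is the classical
   inductive-invariant argument.  (Cons) holds because a state satisfying
   beta violates phi.  For (Inc), the first premise says that phi holds in
   every reachable state (phi is closed, so "not violated" means "holds"),
   hence every trace of (iota, tau) is also a trace of the restricted system
   (iota /\ phi, tau /\ phi /\ phi'), and reaching beta would reach beta /\ phi
   there. *)
From Stdlib Require Import Classical FunctionalExtensionality Arith Lia.

Section Semantics.

Context {Sg : vocab} {D : Type}.

Lemma teval_coincidence (M : structure Sg D) (t : term Sg) env env' :
  (forall x, term_free x t -> env x = env' x) ->
  teval M env t = teval M env' t.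
Proof.
  revert env env'.
  induction t as [y | f a IH]; intros env env' Hagree; simpl.
  - now apply Hagree.
  - f_equal; apply functional_extensionality; intro i.
    apply IH; intros x Hx; apply Hagree; now exists i.
Qed.

Lemma upd_agree (p : formula Sg) (y : nat) env env' (d : D) :
  (forall x, x <> y /\ free x p -> env x = env' x) ->
  forall x, free x p -> upd env y d x = upd env' y d x.
Proof.
  intros Hagree x Hx; unfold upd.
  destruct (Nat.eqb_spec x y); [reflexivity|].
  now apply Hagree.
Qed.

Lemma eval_coincidence (M : structure Sg D) (p : formula Sg) env env' :
  (forall x, free x p -> env x = env' x) ->
  (eval M env p <-> eval M env' p).
Proof.
  revert env env'.
  induction p as [| | r a | t u | q IH | q IHq r IHr | q IHq r IHr | q IHq r IHr
                 | y q IH | y q IH];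
    intros env env' Hagree; simpl in *.
  - tauto.
  - tauto.
  - assert (Hargs : (fun i => teval M env (a i)) = (fun i => teval M env' (a i))).
    { apply functional_extensionality; intro i.
      apply teval_coincidence; intros x Hx; apply Hagree; now exists i. }
    now rewrite Hargs.
  - rewrite (teval_coincidence M t env env'), (teval_coincidence M u env env');
      [tauto | |]; intros x Hx; apply Hagree; tauto.
  - now rewrite (IH env env').
  - rewrite (IHq env env'), (IHr env env'); [tauto | |]; intros x Hx; apply Hagree; tauto.
  - rewrite (IHq env env'), (IHr env env'); [tauto | |]; intros x Hx; apply Hagree; tauto.
  - rewrite (IHq env env'), (IHr env env'); [tauto | |]; intros x Hx; apply Hagree; tauto.
  - split; intros Hq d; apply (IH (upd env y d) (upd env' y d)); try apply Hq;
      apply upd_agree; exact Hagree.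
  - split; intros [d Hq]; exists d; apply (IH (upd env y d) (upd env' y d));
      try apply Hq; apply upd_agree; exact Hagree.
Qed.

Lemma closed_models (M : structure Sg D) (p : formula Sg) env :
  closed p -> eval M env p -> models M p.
Proof.
  intros Hclosed Hp env'.
  apply (eval_coincidence M p env env'); [|exact Hp].
  intros x Hx; contradiction (Hclosed x Hx).
Qed.

Lemma teval_lift (s t : structure Sg D) (b : bool) (u : term Sg) env :
  teval (pair_struct s t) env (term_lift b u) = teval (if b then t else s) env u.
Proof.
  induction u as [y | f a IH]; simpl.
  - now destruct b.
  - destruct b; simpl; f_equal; apply functional_extensionality; intro i; apply IH.
Qed.

Lemma eval_lift (s t : structure Sg D) (b : bool) (p : formula Sg) env :
  eval (pair_struct s t) env (lift b p) <-> eval (if b then t else s) env p.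
Proof.
  revert env.
  induction p as [| | r a | u v | q IH | q IHq r IHr | q IHq r IHr | q IHq r IHr
                 | y q IH | y q IH]; intro env; simpl.
  - now destruct b.
  - now destruct b.
  - assert (Hargs : (fun i => teval (pair_struct s t) env (term_lift b (a i)))
                    = (fun i => teval (if b then t else s) env (a i))).
    { apply functional_extensionality; intro i; apply teval_lift. }
    destruct b; simpl in *; now rewrite Hargs.
  - now rewrite !teval_lift.
  - now rewrite IH.
  - now rewrite IHq, IHr.
  - now rewrite IHq, IHr.
  - now rewrite IHq, IHr.
  - split; intros Hq d; apply IH, Hq.
  - split; intros [d Hq]; exists d; apply IH, Hq.
Qed.

Lemma models_unprimed (s t : structure Sg D) (p : formula Sg) :
  models (pair_struct s t) (unprimed p) <-> models s p.
Proof. split; intros Hp env; apply (eval_lift s t false), Hp. Qed.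

Lemma models_primed (s t : structure Sg D) (p : formula Sg) :
  models (pair_struct s t) (primed p) <-> models t p.
Proof. split; intros Hp env; apply (eval_lift s t true), Hp. Qed.

Lemma models_and (M : structure Sg D) (p q : formula Sg) :
  models M (FAnd p q) <-> models M p /\ models M q.
Proof. unfold models; simpl; firstorder. Qed.

Lemma implies_models (p q : formula Sg) (M : structure Sg D) :
  inhabited D -> implies p q -> models M p -> models M q.
Proof. intros HD Hpq Hp env; exact (Hpq D HD M env (Hp env)). Qed.

Lemma models_not_contra (M : structure Sg D) (p : formula Sg) :
  inhabited D -> models M p -> ~ models M (FNot p).
Proof. intros [d] Hp Hnp; exact (Hnp (fun _ => d) (Hp _)). Qed.

End Semantics.

Section Traces.

Context {Sg : vocab} {D : Type}.

Definition trace (tau : formula (dbl Sg)) (k : nat) (s : nat -> structure Sg D)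
  : Prop :=
  forall i, i < k -> transition tau (s i) (s (S i)).

Lemma trace_prefix tau k s i : trace tau k s -> i <= k -> trace tau i s.
Proof. intros Htr Hik j Hj; apply Htr; lia. Qed.

Lemma trace_invariant (tau : formula (dbl Sg)) (phi : formula Sg) k s :
  (forall s0 s1 : structure Sg D,
     models s0 phi -> transition tau s0 s1 -> models s1 phi) ->
  models (s 0) phi -> trace tau k s ->
  forall i, i <= k -> models (s i) phi.
Proof.
  intros Hstep H0 Htr i.
  induction i as [| i IH]; intro Hik; [exact H0|].
  apply (Hstep (s i)); [apply IH; lia | apply Htr; lia].
Qed.

Lemma trace_restrict (tau : formula (dbl Sg)) (phi : formula Sg) k s :
  trace tau k s -> (forall i, i <= k -> models (s i) phi) ->
  trace (FAnd tau (FAnd (unprimed phi) (primed phi))) k s.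
Proof.
  intros Htr Hphi i Hi.
  apply models_and; split; [now apply Htr|].
  apply models_and; split.
  - apply models_unprimed, Hphi; lia.
  - apply models_primed, Hphi; lia.
Qed.

End Traces.

Lemma safe_FNot_invariant {Sg D} (iota phi : formula Sg) tau k
    (s : nat -> structure Sg D) :
  closed phi -> safe iota tau (FNot phi) -> inhabited D ->
  models (s 0) iota -> trace tau k s ->
  forall i, i <= k -> models (s i) phi.
Proof.
  intros Hclosed Hsafe HD H0 Htr i Hik.
  apply NNPP; intro Hnot.
  apply (Hsafe D HD i s H0 (trace_prefix tau k s i Htr Hik)).
  intros env Hphi; exact (Hnot (closed_models (s i) phi env Hclosed Hphi)).
Qed.

Lemma safe_Ind {Sg} (iota phi : formula Sg) tau :
  implies iota phi -> implies (FAnd (unprimed phi) tau) (primed phi) ->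
  safe iota tau (FNot phi).
Proof.
  intros Hinit Hcons D HD k s H0 Htr.
  apply models_not_contra; [exact HD|].
  apply (trace_invariant tau phi k s); [| now apply (implies_models iota) | exact Htr | lia].
  intros s0 s1 Hs0 Htrans.
  apply (models_primed s0 s1), (implies_models (FAnd (unprimed phi) tau)); auto.
  apply models_and; split; [now apply models_unprimed | exact Htrans].
Qed.

Lemma safe_Cons {Sg} (iota beta phi : formula Sg) tau :
  safe iota tau (FNot phi) -> implies phi (FNot beta) -> safe iota tau beta.
Proof.
  intros Hsafe Himp D HD k s H0 Htr Hbeta.
  apply (Hsafe D HD k s H0 Htr).
  intros env Hphi; exact (Himp D HD (s k) env Hphi (Hbeta env)).
Qed.

Lemma safe_Inc {Sg} (iota beta phi : formula Sg) tau :
  closed phi -> safe iota tau (FNot phi) ->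
  safe (FAnd iota phi) (FAnd tau (FAnd (unprimed phi) (primed phi))) (FAnd beta phi) ->
  safe iota tau beta.
Proof.
  intros Hclosed Hsafe_phi Hsafe_restr D HD k s H0 Htr Hbeta.
  pose proof (safe_FNot_invariant iota phi tau k s Hclosed Hsafe_phi HD H0 Htr) as Hphi.
  apply (Hsafe_restr D HD k s).
  - apply models_and; split; [exact H0 | apply Hphi; lia].
  - now apply trace_restrict.
  - apply models_and; split; [exact Hbeta | apply Hphi; lia].
Qed.

Lemma FI_sound {Sg} (iota : formula Sg) tau beta :
  FI_provable iota tau beta -> safe iota tau beta.
Proof.
  induction 1.
  - now apply safe_Ind.
  - now apply (safe_Cons _ _ phi).
  - now apply (safe_Inc _ _ phi).
Qed.

Theorem theorem4p4 (Sg : vocab) (iota : formula Sg) (tau : formula (dbl Sg))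
  (beta : formula Sg) :
  closed iota -> closed tau -> closed beta ->
  FI_provable iota tau beta ->
  safe iota tau beta.
Proof.
  intros _ _ _ Hproof.
  exact (FI_sound iota tau beta Hproof).
Qed.
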